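(* Let $a,b,e\in\mathbb Z$ with $a\neq 0$, $e>0$, such that $h_2(j)=aj^2+bj+e$ satisfies $h_2(j)\ge 0$ for all integers $j\ge 0$ (so $h_2\in\mathcal H_0$; necessarily $a>0$). Let $\alpha=a/e$, $\beta=b/e$. If $\alpha+\beta<2$, then $\operatorname{hdepth}(h_2)=c(h_2)$. If $\alpha+\beta\ge 2$, then $\operatorname{hdepth}(h_2)\ge 2$.
   Context: Let $\mathcal H_0$ denote the set of functions $h:\mathbb Z_{\ge 0}\to\mathbb Z_{\ge 0}$ with $h(0)>0$. For $h\in\mathcal H_0$ and integers $0\le k\le d$, put $\beta_k^d(h)=\sum_{j=0}^k(-1)^{k-j}\binom{d-j}{k-j}h(j)$. The Hilbert depth of $h$ is $\operatorname{hdepth}(h)=\max\{d\in\mathbb Z_{\ge0}:\ \beta_k^d(h)\ge 0\text{ for all }0\le k\le d\}$; this set contains $d=0$ and is known to be bounded above by $c(h):=\lfloor h(1)/h(0)\rfloor$, so the maximum exists. Note $c(h_2)=\lfloor\alpha+\beta\rfloor+1$. *)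

From mathcomp Require Import all_boot all_order all_algebra.
Set Implicit Arguments. Unset Strict Implicit. Unset Printing Implicit Defensive.
Import Order.TTheory GRing.Theory Num.Theory.
Local Open Scope ring_scope.

(* Functions h : Z_{>=0} -> Z_{>=0} are represented as  h : nat -> int
   (nonnegativity is a separate hypothesis). *)

Definition beta (h : nat -> int) (d k : nat) : int :=
  \sum_(0 <= j < k.+1) (-1) ^+ (k - j) * ('C(d - j, k - j))%:Z * h j.

Definition hdepth_ok (h : nat -> int) (d : nat) : Prop :=
  forall k : nat, (k <= d)%N -> 0 <= beta h d k.

Definition is_hdepth (h : nat -> int) (d : nat) : Prop :=
  hdepth_ok h d /\ forall d' : nat, hdepth_ok h d' -> (d' <= d)%N.

Definition cbound (h : nat -> int) : int := (h 1%N %/ h 0%N)%Z.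

(* The bound hdepth(h) <= c(h) comes from beta_1^d = h(1) - d h(0) alone.  For
   d <= 2 the relevant numbers are h(0), h(1) - d h(0) and, for d = 2,
   beta_2^2 = h(0) - h(1) + h(2) = 2a + h(1), which is nonnegative because a
   nonnegative quadratic has a >= 0.  Since h(1)/h(0) = 1 + alpha + beta, the
   case alpha + beta < 2 forces c(h2) <= 2, where these numbers decide
   everything; otherwise c(h2) >= 2 and d = 2 is admissible. *)
From mathcomp Require Import all_boot all_order all_algebra.
From mathcomp Require Import zify.
Set Implicit Arguments. Unset Strict Implicit. Unset Printing Implicit Defensive.
Import Order.TTheory GRing.Theory Num.Theory.
Local Open Scope ring_scope.

Lemma beta_0 h d : beta h d 0 = h 0%N.
Proof. by rewrite /beta big_nat1 subn0 bin0 expr0 mul1r mul1r. Qed.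

Lemma beta_1 h d : (1 <= d)%N -> beta h d 1 = h 1%N - d%:Z * h 0%N.
Proof.
move=> d_ge1; rewrite /beta !big_nat_recr //= big_geq // subn0 subnn.
rewrite bin0 bin1 expr0 expr1; lia.
Qed.

Lemma beta_2_2 h : beta h 2 2 = h 0%N - h 1%N + h 2%N.
Proof.
rewrite /beta !big_nat_recr //= big_geq // !subn0 !subnn !binn expr0 expr1 expr2.
lia.
Qed.

Lemma hdepth_ok0 h : 0 <= h 0%N -> hdepth_ok h 0.
Proof. by move=> h0_ge0 [|k] // _; rewrite beta_0. Qed.

Lemma hdepth_ok1 h : 0 <= h 0%N -> h 0%N <= h 1%N -> hdepth_ok h 1.
Proof. by move=> h0_ge0 h01 [|[|k]] // _; rewrite ?beta_0 ?beta_1 //; lia. Qed.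

Lemma hdepth_ok2 h :
  0 <= h 0%N -> 2 * h 0%N <= h 1%N -> 0 <= h 0%N - h 1%N + h 2%N ->
  hdepth_ok h 2.
Proof.
move=> h0_ge0 h01 beta22_ge0 [|[|[|k]]] // _; rewrite ?beta_0 ?beta_2_2 //.
by rewrite beta_1 //; lia.
Qed.

Lemma cbound_bounds h :
  0 < h 0%N -> cbound h * h 0%N <= h 1%N < (cbound h + 1) * h 0%N.
Proof.
move=> h0_gt0; have := divz_eq (h 1%N) (h 0%N); rewrite /cbound.
have := modz_ge0 (h 1%N) (lt0r_neq0 h0_gt0); have := ltz_pmod (h 1%N) h0_gt0.
lia.
Qed.

Lemma hdepth_ok_le_cbound h d :
  0 < h 0%N -> hdepth_ok h d -> (d <= `|cbound h|)%N.
Proof.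
move=> h0_gt0; case: d => [|d] // /(_ 1%N isT); rewrite beta_1 //.
have := cbound_bounds h0_gt0; nia.
Qed.

Definition hdepth_okb h d := [forall k : 'I_d.+1, 0 <= beta h d k].

Lemma hdepth_okbP h d : reflect (hdepth_ok h d) (hdepth_okb h d).
Proof.
apply: (iffP forallP) => [ok k kd | ok k]; first exact: (ok (Ordinal (kd : (k < d.+1)%N))).
by apply: ok; rewrite -ltnS.
Qed.

Lemma exists_is_hdepth_ge h d0 :
  0 < h 0%N -> hdepth_ok h d0 -> exists d, is_hdepth h d /\ (d0 <= d)%N.
Proof.
move=> h0_gt0 /hdepth_okbP ok_d0.
have ub d : hdepth_okb h d -> (d <= `|cbound h|)%N.
  by move/hdepth_okbP; apply: hdepth_ok_le_cbound.
have [d /hdepth_okbP ok_d d_max] := ex_maxnP (ex_intro _ d0 ok_d0) ub.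
exists d; split; last exact: d_max.
by split=> // d' /hdepth_okbP; apply: d_max.
Qed.

Lemma is_hdepth_cbound h :
  0 < h 0%N -> hdepth_ok h `|cbound h| -> is_hdepth h `|cbound h|.
Proof. by move=> h0_gt0 ok; split=> // d; apply: hdepth_ok_le_cbound. Qed.

Lemma quadratic_nonneg_lead_ge0 (a b e : int) :
  (forall j : nat, 0 <= a * (j%:Z) ^+ 2 + b * j%:Z + e) -> 0 <= a.
Proof.
move=> /(_ (`|b| + `|e| + 1)%N); rewrite expr2.
set j := (`|b| + `|e| + 1)%N; have : j%:Z = `|b| + `|e| + 1 by lia.
nia.
Qed.

Lemma ltr_intr_ratio_add (R : realFieldType) (a b e : int) (n : nat) : 0 < e ->
  (a%:~R / e%:~R + b%:~R / e%:~R < n%:R :> R) = (a + b < n%:Z * e).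
Proof.
move=> e_gt0; rewrite -mulrDl ltr_pdivrMr ?ltr0z // -intrD -[n%:R]/(n%:Z%:~R) -intrM.
by rewrite ltr_int.
Qed.

Theorem lemma2p2 (a b e : int) :
  a != 0 -> 0 < e ->
  (forall j : nat, 0 <= a * (j%:Z) ^+ 2 + b * j%:Z + e) ->
  let h2 := fun j : nat => a * (j%:Z) ^+ 2 + b * j%:Z + e in
  let alpha : rat := a%:~R / e%:~R in
  let beta0 : rat := b%:~R / e%:~R in
  (alpha + beta0 < 2 -> is_hdepth h2 `|cbound h2|%N) /\
  (2 <= alpha + beta0 -> exists d : nat, is_hdepth h2 d /\ (2 <= d)%N).
Proof.
move=> _ e_gt0 h2_ge0 h2 alpha beta0.
have a_ge0 := quadratic_nonneg_lead_ge0 h2_ge0.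
have h0E : h2 0%N = e by rewrite /h2; lia.
have h1E : h2 1%N = a + b + e by rewrite /h2; lia.
have h2E : h2 2%N = 4 * a + 2 * b + e by rewrite /h2 expr2; lia.
have h0_gt0 : 0 < h2 0%N by rewrite h0E.
have h1_ge0 : 0 <= a + b + e by rewrite -h1E; apply: h2_ge0.
have ok2 : 2 * h2 0%N <= h2 1%N -> hdepth_ok h2 2.
  by move=> h01; apply: hdepth_ok2; rewrite ?h0E ?h1E ?h2E; lia.
have := cbound_bounds h0_gt0; rewrite -/h2 h0E h1E => c_bounds.
have ratioE : (alpha + beta0 < 2) = (a + b < 2 * e) by exact: ltr_intr_ratio_add.
split; last first.
  rewrite leNgt ratioE -leNgt => ab_ge.
  by apply: exists_is_hdepth_ge (ok2 _); rewrite ?h0E ?h1E; lia.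
rewrite ratioE => ab_lt; apply: is_hdepth_cbound => //.
have [n cE] : exists n : nat, cbound h2 = n by exists `|cbound h2|%N; nia.
rewrite cE absz_nat; move: c_bounds; rewrite {}cE.
case: n => [|[|[|n]]] c_bounds; last by nia.
- by apply: hdepth_ok0; lia.
- by apply: hdepth_ok1; rewrite ?h0E ?h1E; lia.
- by apply: ok2; rewrite ?h0E ?h1E; lia.
Qed.
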